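(* For all integers $d\ge0$, $0\le k\le d$ and $i\ge1$, $$\dot{\mathcal{F}}_{d,k,d-k}>\dot{\mathcal{F}}_{d,k+i,d-k+i}>0.$$
   Context: Let $P_k$ denote the classical Legendre polynomial of degree $k$ on $[-1,1]$, normalized so that $P_k(1)=1$ (orthogonal with respect to $\int_{-1}^1\cdot\,dt$). For integers $a,b,c\ge0$, $\dot{\mathcal{F}}_{a,b,c}:=\int_{-1}^1P_a(\tau)P_b(\tau)P_c(\tau)\,d\tau$. *)

From Stdlib Require Import Reals.
From Coquelicot Require Import Coquelicot.
Open Scope R_scope.

(* legendre_pair n x = (P_n(x), P_{n+1}(x)), computed via Bonnet's recurrence
   (m+2) P_{m+2}(x) = (2m+3) x P_{m+1}(x) - (m+1) P_m(x),
   with P_0 = 1, P_1 = x.  This gives the classical Legendre polynomials,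
   normalized by P_k(1) = 1 and orthogonal on [-1,1] w.r.t. dt. *)
Fixpoint legendre_pair (n : nat) (x : R) : R * R :=
  match n with
  | O => (1, x)
  | S m =>
      let (p, q) := legendre_pair m x in
      (q, ((2 * INR m + 3) * x * q - (INR m + 1) * p) / (INR m + 2))
  end.

Definition legendre (n : nat) (x : R) : R := fst (legendre_pair n x).

Definition Fdot (a b c : nat) : R :=
  RInt (fun t => legendre a t * legendre b t * legendre c t) (-1) 1.

From Stdlib Require Import Reals Lra Lia ZArith.
From Coquelicot Require Import Coquelicot.
Open Scope R_scope.

(* Proof of Lemma A.2 via Adams' closed form for triple Legendre integrals:
     \int_{-1}^1 P_a P_b P_c = 2/(2s+1) * A_{s-a} A_{s-b} A_{s-c} / A_s
   when a + b + c = 2s is even and the triangle inequality holds, where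
   A_n = \prod_{j<n} (2j+1)/(2j+2).

   1. Basic facts on P_n: Bonnet's recurrence, an explicit derivative,
      endpoint values, and \int P_n = 2 [n = 0].
   2. Expanding the moment \int t P_a P_b P_c through the three-term relation
      in b or in c shows that b, c |-> Fdot a b c satisfies a "shift
      recurrence", whose solutions are determined by their values at c = 0.
   3. Adams' closed form (extended by zero) satisfies the same recurrence,
      a rational identity in the A-values, and agrees with Fdot at c = 0
      (by the symmetry of Fdot this reduces to \int P_b); hence it equals Fdot.
   4. On the triples (d, k+i, d-k+i) the formula is 2 A_{d-k} A_k / w_d(i)
      with w_d(i) = (2(d+i)+1) A_{d+i} / A_i, which is positive and strictly
      increasing in i; the lemma follows. *)

Lemma legendre_0 x : legendre 0 x = 1.
Proof. reflexivity. Qed.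

Lemma legendre_1 x : legendre 1 x = x.
Proof. reflexivity. Qed.

Lemma legendre_SS n x : legendre (S (S n)) x =
  ((2 * INR n + 3) * x * legendre (S n) x - (INR n + 1) * legendre n x) / (INR n + 2).
Proof. unfold legendre; simpl. destruct (legendre_pair n x); reflexivity. Qed.

Lemma INR_plus_2_neq_0 n : INR n + 2 <> 0.
Proof. pose proof (pos_INR n); lra. Qed.

Fixpoint legendre_deriv (n : nat) (x : R) : R :=
  match n with
  | O => 0
  | S O => 1
  | S ((S m) as n') => (2 * INR m + 3) * legendre n' x + legendre_deriv m x
  end.

(* The two companion identities x P'_{n+1} - P'_n = (n+1) P_{n+1} and
   x P'_n - P'_{n+1} = -(n+1) P_n, which make Bonnet's recurrence
   compatible with the derivative recursion. *)
Lemma legendre_deriv_identities n x :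
  x * legendre_deriv (S n) x - legendre_deriv n x = (INR n + 1) * legendre (S n) x /\
  x * legendre_deriv n x - legendre_deriv (S n) x = - (INR n + 1) * legendre n x.
Proof.
  induction n as [|n [IH1 IH2]].
  - simpl. rewrite legendre_1, legendre_0. split; ring.
  - change (legendre_deriv (S (S n)) x)
      with ((2 * INR n + 3) * legendre (S n) x + legendre_deriv n x).
    rewrite S_INR. split.
    + rewrite legendre_SS. pose proof (INR_plus_2_neq_0 n).
      replace (x * ((2 * INR n + 3) * legendre (S n) x + legendre_deriv n x)
               - legendre_deriv (S n) x)
        with ((2 * INR n + 3) * x * legendre (S n) x
              + (x * legendre_deriv n x - legendre_deriv (S n) x)) by ring.
      rewrite IH2. field. auto.
    + replace (x * legendre_deriv (S n) x
               - ((2 * INR n + 3) * legendre (S n) x + legendre_deriv n x))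
        with ((x * legendre_deriv (S n) x - legendre_deriv n x)
              - (2 * INR n + 3) * legendre (S n) x) by ring.
      rewrite IH1. ring.
Qed.

Lemma is_derive_legendre_SS n x :
  is_derive (legendre n) x (legendre_deriv n x) ->
  is_derive (legendre (S n)) x (legendre_deriv (S n) x) ->
  is_derive (legendre (S (S n))) x (legendre_deriv (S (S n)) x).
Proof.
  intros D0 D1. pose proof (INR_plus_2_neq_0 n) as Hn.
  set (u := (2 * INR n + 3) / (INR n + 2)). set (v := - (INR n + 1) / (INR n + 2)).
  apply (is_derive_ext (fun t => u * (t * legendre (S n) t) + v * legendre n t)).
  { intros t.
    change (@eq R (u * (t * legendre (S n) t) + v * legendre n t) (legendre (S (S n)) t)).
    rewrite legendre_SS. unfold u, v. field. auto. }
  assert (Dprod := is_derive_mult (fun t => t) (legendre (S n)) x _ _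
                     (is_derive_id x) D1 Rmult_comm).
  assert (D := is_derive_plus _ _ x _ _ (is_derive_scal _ x u _ Dprod)
                                        (is_derive_scal _ x v _ D0)).
  unfold plus, mult, scal, one in D; simpl in D; unfold mult in D; simpl in D.
  replace (legendre_deriv (S (S n)) x)
    with (u * (1 * legendre (S n) x + x * legendre_deriv (S n) x)
          + v * legendre_deriv n x); [exact D|].
  change (legendre_deriv (S (S n)) x)
    with ((2 * INR n + 3) * legendre (S n) x + legendre_deriv n x).
  destruct (legendre_deriv_identities n x) as [E _].
  replace (x * legendre_deriv (S n) x)
    with (legendre_deriv n x + (INR n + 1) * legendre (S n) x) by lra.
  unfold u, v. field. auto.
Qed.

Lemma is_derive_legendre n x : is_derive (legendre n) x (legendre_deriv n x).
Proof.
  enough (H : is_derive (legendre n) x (legendre_deriv n x) /\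
              is_derive (legendre (S n)) x (legendre_deriv (S n) x)) by apply H.
  induction n as [|n [IH0 IH1]].
  - split.
    + apply (is_derive_ext (fun _ => 1)); [reflexivity|]. auto_derive; auto.
    + apply (is_derive_ext (fun t => t)); [reflexivity|]. auto_derive; auto.
  - split; [exact IH1|]. now apply is_derive_legendre_SS.
Qed.

Lemma continuous_legendre n x : continuous (legendre n) x.
Proof.
  apply (ex_derive_continuous (legendre n)). eexists. apply is_derive_legendre.
Qed.

Lemma legendre_endpoints n : legendre n 1 = 1 /\ legendre n (-1) = (-1) ^ n.
Proof.
  enough (H : legendre n 1 = 1 /\ legendre n (-1) = (-1) ^ n /\
              legendre (S n) 1 = 1 /\ legendre (S n) (-1) = (-1) ^ (S n)) by tauto.
  induction n as [|n (H0 & H0' & H1 & H1')].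
  - simpl. rewrite !legendre_0, !legendre_1. repeat split; ring.
  - pose proof (INR_plus_2_neq_0 n). repeat split; auto.
    + rewrite legendre_SS, H1, H0. field. auto.
    + rewrite legendre_SS, H1', H0'. simpl. field. auto.
Qed.

(* \int_{-1}^1 P_n = 2 if n = 0 and 0 otherwise: for n >= 1,
   (P_{n+1} - P_{n-1}) / (2n+1) is an antiderivative of P_n
   vanishing at both endpoints. *)
Lemma RInt_legendre n : RInt (legendre n) (-1) 1 = if Nat.eqb n 0 then 2 else 0.
Proof.
  destruct n as [|n].
  - rewrite (RInt_ext _ (fun _ => 1)) by reflexivity.
    rewrite RInt_const. simpl. unfold scal; simpl; unfold mult; simpl. ring.
  - simpl Nat.eqb. pose proof (pos_INR n).
    set (F t := (legendre (S (S n)) t - legendre n t) / (2 * INR n + 3)).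
    apply is_RInt_unique.
    replace 0 with (minus (F 1) (F (-1))).
    + apply (is_RInt_derive F); [|intros; apply continuous_legendre].
      intros x _.
      apply (is_derive_ext (fun t => / (2 * INR n + 3) *
                             (legendre (S (S n)) t - legendre n t))).
      { intros t.
        change (@eq R (/ (2 * INR n + 3) * (legendre (S (S n)) t - legendre n t)) (F t)).
        unfold F. field. lra. }
      replace (legendre (S n) x) with (/ (2 * INR n + 3) *
                (legendre_deriv (S (S n)) x - legendre_deriv n x)).
      * apply (is_derive_scal (fun t => legendre (S (S n)) t - legendre n t)).
        apply (is_derive_minus (legendre (S (S n))) (legendre n));
          apply is_derive_legendre.
      * simpl legendre_deriv at 1. field. lra.
    + unfold minus, plus, opp, F; simpl.
      destruct (legendre_endpoints n) as [A1 A2].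
      destruct (legendre_endpoints (S (S n))) as [A3 A4].
      rewrite A1, A2, A3, A4. simpl. field. lra.
Qed.

Lemma x_legendre b x : (2 * INR b + 1) * (x * legendre b x) =
  (INR b + 1) * legendre (S b) x + INR b * legendre (b - 1) x.
Proof.
  destruct b as [|m].
  - simpl. rewrite legendre_1, legendre_0. ring.
  - rewrite legendre_SS. replace (S m - 1)%nat with m by lia. rewrite S_INR.
    pose proof (pos_INR m). field. lra.
Qed.

Lemma continuous_legendre3 a b c x :
  continuous (fun t => legendre a t * legendre b t * legendre c t) x.
Proof.
  apply (@continuous_mult R_UniformSpace R_AbsRing);
    [apply (@continuous_mult R_UniformSpace R_AbsRing)|]; apply continuous_legendre.
Qed.

Lemma ex_RInt_legendre3 a b c :
  ex_RInt (fun t => legendre a t * legendre b t * legendre c t) (-1) 1.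
Proof.
  apply (@ex_RInt_continuous R_CompleteNormedModule). intros x _.
  apply continuous_legendre3.
Qed.

Definition moment (a b c : nat) : R :=
  RInt (fun t => t * (legendre a t * legendre b t * legendre c t)) (-1) 1.

Lemma moment_swap23 a b c : moment a b c = moment a c b.
Proof. unfold moment. apply RInt_ext. intros; simpl; ring. Qed.

Lemma Fdot_swap23 a b c : Fdot a b c = Fdot a c b.
Proof. unfold Fdot. apply RInt_ext. intros; simpl; ring. Qed.

Lemma Fdot_swap12 a b c : Fdot a b c = Fdot b a c.
Proof. unfold Fdot. apply RInt_ext. intros; simpl; ring. Qed.

Lemma RInt_Rmult (f : R -> R) (k a b : R) : ex_RInt f a b ->
  RInt (fun t => k * f t) a b = k * RInt f a b.
Proof. apply (RInt_scal f a b k). Qed.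

Lemma RInt_Rplus (f g : R -> R) (a b : R) : ex_RInt f a b -> ex_RInt g a b ->
  RInt (fun t => f t + g t) a b = RInt f a b + RInt g a b.
Proof. apply (RInt_plus f g a b). Qed.

Lemma moment_expand a b c : (2 * INR b + 1) * moment a b c =
  (INR b + 1) * Fdot a (S b) c + INR b * Fdot a (b - 1) c.
Proof.
  unfold moment, Fdot.
  assert (ex_moment :
    ex_RInt (fun t => t * (legendre a t * legendre b t * legendre c t)) (-1) 1).
  { apply (@ex_RInt_continuous R_CompleteNormedModule). intros x _.
    apply (@continuous_mult R_UniformSpace R_AbsRing);
      [apply continuous_id|apply continuous_legendre3]. }
  rewrite <- RInt_Rmult by exact ex_moment.
  rewrite <- (RInt_Rmult _ (INR b + 1)) by apply ex_RInt_legendre3.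
  rewrite <- (RInt_Rmult _ (INR b)) by apply ex_RInt_legendre3.
  rewrite <- RInt_Rplus.
  - apply RInt_ext. intros x _. simpl.
    transitivity (legendre a x * legendre c x * ((2 * INR b + 1) * (x * legendre b x)));
      [ring|]. rewrite x_legendre. ring.
  - apply (ex_RInt_scal (fun t => legendre a t * legendre (S b) t * legendre c t)).
    apply ex_RInt_legendre3.
  - apply (ex_RInt_scal (fun t => legendre a t * legendre (b - 1) t * legendre c t)).
    apply ex_RInt_legendre3.
Qed.

(* The shift recurrence satisfied by f = Fdot a (for fixed a): it expresses
   that the moment \int t P_a P_b P_c can be expanded through either P_b or
   P_c. *)
Definition shift_rec (f : nat -> nat -> R) : Prop := forall b c,
  (2 * INR c + 1) * ((INR b + 1) * f (S b) c + INR b * f (b - 1)%nat c) =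
  (2 * INR b + 1) * ((INR c + 1) * f b (S c) + INR c * f b (c - 1)%nat).

Lemma Fdot_shift_rec a : shift_rec (Fdot a).
Proof.
  intros b c.
  rewrite <- moment_expand, (Fdot_swap23 a b (S c)), (Fdot_swap23 a b (c - 1)),
    <- moment_expand, moment_swap23. ring.
Qed.

(* A solution of the shift recurrence is determined by its values at c = 0:
   the recurrence at (b, c) gives f b (c+1) from f at c and c - 1, with the
   nonzero coefficient (2b+1)(c+1). *)
Lemma shift_rec_unique f g : shift_rec f -> shift_rec g ->
  (forall b, f b 0%nat = g b 0%nat) -> forall b c, f b c = g b c.
Proof.
  intros Hf Hg H0.
  assert (step : forall c, (forall b, f b c = g b c) ->
            (forall b, f b (c - 1)%nat = g b (c - 1)%nat) ->
            forall b, f b (S c) = g b (S c)).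
  { intros c H1 H2 b. pose proof (Hf b c) as E1. pose proof (Hg b c) as E2.
    rewrite !H1, H2 in E1. pose proof (pos_INR b). pose proof (pos_INR c).
    assert (E : (2 * INR b + 1) * (INR c + 1) * (f b (S c) - g b (S c)) = 0) by lra.
    apply Rmult_integral in E as [E|E]; [|lra].
    apply Rmult_integral in E as [E|E]; lra. }
  enough (K : forall c, (forall b, f b c = g b c) /\ (forall b, f b (S c) = g b (S c)))
    by (intros b c; apply K).
  induction c as [|c [IH0 IH1]].
  - split; [exact H0|]. apply step; [exact H0|exact H0].
  - split; [exact IH1|]. apply step; [exact IH1|].
    simpl; rewrite Nat.sub_0_r; exact IH0.
Qed.

(* A_n = \prod_{j<n} (2j+1)/(2j+2) = binom(2n,n)/4^n, the coefficient in
   Adams' formula for \int P_a P_b P_c. *)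
Fixpoint acoef (n : nat) : R :=
  match n with O => 1 | S m => acoef m * (2 * INR m + 1) / (2 * INR m + 2) end.

Lemma acoef_pos n : 0 < acoef n.
Proof.
  induction n as [|n IH]; simpl; [lra|]. pose proof (pos_INR n).
  apply Rdiv_lt_0_compat; [apply Rmult_lt_0_compat|]; lra.
Qed.

Lemma acoef_S m : (2 * INR (S m) - 1) * acoef m = 2 * INR (S m) * acoef (S m).
Proof. simpl acoef. rewrite S_INR. pose proof (pos_INR m). field. lra. Qed.

(* A extended by zero to negative integers; with this convention Adams'
   formula below vanishes exactly when the triangle inequality fails. *)
Definition acoefZ (z : Z) : R :=
  match z with Z.neg _ => 0 | _ => acoef (Z.to_nat z) end.

Lemma acoefZ_nat n : acoefZ (Z.of_nat n) = acoef n.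
Proof. destruct n; [reflexivity|]. simpl. now rewrite SuccNat2Pos.id_succ. Qed.

Lemma acoefZ_neg z : (z < 0)%Z -> acoefZ z = 0.
Proof. destruct z; simpl; intros; auto; lia. Qed.

Lemma acoefZ_pred z : (2 * IZR z - 1) * acoefZ (z - 1) = 2 * IZR z * acoefZ z.
Proof.
  destruct (Z_lt_le_dec z 1).
  - destruct (Z_lt_le_dec z 0).
    + rewrite !acoefZ_neg by lia. ring.
    + replace z with 0%Z by lia. rewrite acoefZ_neg by lia. simpl. ring.
  - destruct (Z_of_nat_complete (z - 1)) as [m Hm]; [lia|].
    replace z with (Z.of_nat (S m)) by lia.
    replace (Z.of_nat (S m) - 1)%Z with (Z.of_nat m) by lia.
    rewrite !acoefZ_nat, <- INR_IZR_INZ. apply acoef_S.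
Qed.

Lemma odd_IZR_neq_0 z : 2 * IZR z - 1 <> 0.
Proof.
  intro H. assert (H2 : IZR (2 * z - 1) = 0) by (rewrite minus_IZR, mult_IZR; simpl; lra).
  apply eq_IZR_R0 in H2. lia.
Qed.

Definition gaunt (a b c : nat) : R :=
  if Nat.even (a + b + c) then
    let s := ((a + b + c) / 2)%nat in
    2 / (2 * INR s + 1) * acoefZ (Z.of_nat s - Z.of_nat a)
      * acoefZ (Z.of_nat s - Z.of_nat b) * acoefZ (Z.of_nat s - Z.of_nat c) / acoef s
  else 0.

Lemma gaunt_even a b c s : (a + b + c = 2 * s)%nat ->
  gaunt a b c = 2 / (2 * INR s + 1) * acoefZ (Z.of_nat s - Z.of_nat a)
    * acoefZ (Z.of_nat s - Z.of_nat b) * acoefZ (Z.of_nat s - Z.of_nat c) / acoef s.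
Proof.
  intros H. unfold gaunt. rewrite H.
  replace (Nat.even (2 * s)) with true by (symmetry; apply Nat.even_spec; exists s; lia).
  now rewrite Nat.mul_comm, Nat.div_mul.
Qed.

Lemma gaunt_odd a b c m : (a + b + c = 2 * m + 1)%nat -> gaunt a b c = 0.
Proof.
  intros H. unfold gaunt. rewrite H.
  replace (Nat.even (2 * m + 1)) with false; [reflexivity|].
  symmetry. apply Bool.not_true_iff_false. rewrite Nat.even_spec.
  intros [k Hk]. lia.
Qed.

(* The rational identity behind the shift recurrence for Adams' formula,
   in the variables p = s - a, q = s - b, r = s - c (so s = p + q + r - 1),
   with A-values at p, q, r, s and at their predecessors. *)
Lemma gaunt_rec_identity (p q r s ap aq ar apm aqm arm As Asm : R) :
  s = p + q + r - 1 -> 1 <= s ->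
  (2*p-1)*apm = 2*p*ap -> (2*q-1)*aqm = 2*q*aq -> (2*r-1)*arm = 2*r*ar ->
  (2*s-1)*Asm = 2*s*As ->
  2*p-1 <> 0 -> 2*q-1 <> 0 -> 2*r-1 <> 0 -> As <> 0 ->
  (2*(s-r)+1)*((s-q+1)*(2/(2*s+1)*ap*aqm*ar/As) + (s-q)*(2/(2*s-1)*apm*aq*arm/Asm)) =
  (2*(s-q)+1)*((s-r+1)*(2/(2*s+1)*ap*aq*arm/As) + (s-r)*(2/(2*s-1)*apm*aqm*ar/Asm)).
Proof.
  intros Hs Hs1 Hp Hq Hr HA Hp0 Hq0 Hr0 HA0.
  assert (Ep : apm = 2*p*ap/(2*p-1)) by (field_simplify_eq; lra).
  assert (Eq : aqm = 2*q*aq/(2*q-1)) by (field_simplify_eq; lra).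
  assert (Er : arm = 2*r*ar/(2*r-1)) by (field_simplify_eq; lra).
  assert (Es : Asm = 2*s*As/(2*s-1)) by (field_simplify_eq; lra).
  subst apm aqm arm Asm s. field. repeat split; auto; lra.
Qed.

(* Even a + b + c: every term of the recurrence has odd index sum, or a
   vanishing coefficient b = 0 or c = 0. *)
Lemma gaunt_shift_rec_even a b c s : (a + b + c = 2 * s)%nat ->
  (2 * INR c + 1) * ((INR b + 1) * gaunt a (S b) c + INR b * gaunt a (b - 1) c) =
  (2 * INR b + 1) * ((INR c + 1) * gaunt a b (S c) + INR c * gaunt a b (c - 1)).
Proof.
  intros Hs.
  rewrite (gaunt_odd a (S b) c s), (gaunt_odd a b (S c) s) by lia.
  assert (Hb : INR b * gaunt a (b - 1) c = 0).
  { destruct b as [|b]; [simpl; ring|]. rewrite (gaunt_odd _ _ _ (s - 1)) by lia. ring. }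
  assert (Hc : INR c * gaunt a b (c - 1) = 0).
  { destruct c as [|c]; [simpl; ring|]. rewrite (gaunt_odd _ _ _ (s - 1)) by lia. ring. }
  rewrite Hb, Hc. ring.
Qed.

(* Odd a + b + c = 2m + 1: all four terms are given by Adams' formula with
   s = m + 1 or s = m, and the recurrence reduces to gaunt_rec_identity. *)
Lemma gaunt_shift_rec_odd a b c m : (a + b + c = 2 * m + 1)%nat ->
  (2 * INR c + 1) * ((INR b + 1) * gaunt a (S b) c + INR b * gaunt a (b - 1) c) =
  (2 * INR b + 1) * ((INR c + 1) * gaunt a b (S c) + INR c * gaunt a b (c - 1)).
Proof.
  intros Hm.
  set (P := (Z.of_nat (S m) - Z.of_nat a)%Z).
  set (Q := (Z.of_nat (S m) - Z.of_nat b)%Z).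
  set (R := (Z.of_nat (S m) - Z.of_nat c)%Z).
  assert (Hb1 : gaunt a (S b) c = 2 / (2 * INR (S m) + 1) * acoefZ P * acoefZ (Q - 1)
                                  * acoefZ R / acoef (S m)).
  { rewrite (gaunt_even _ _ _ (S m)) by lia.
    now replace (Z.of_nat (S m) - Z.of_nat (S b))%Z with (Q - 1)%Z by (unfold Q; lia). }
  assert (Hc1 : gaunt a b (S c) = 2 / (2 * INR (S m) + 1) * acoefZ P * acoefZ Q
                                  * acoefZ (R - 1) / acoef (S m)).
  { rewrite (gaunt_even _ _ _ (S m)) by lia.
    now replace (Z.of_nat (S m) - Z.of_nat (S c))%Z with (R - 1)%Z by (unfold R; lia). }
  assert (Hb0 : INR b * gaunt a (b - 1) c = INR b * (2 / (2 * INR m + 1)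
                  * acoefZ (P - 1) * acoefZ Q * acoefZ (R - 1) / acoef m)).
  { destruct b as [|b]; [simpl; ring|]. rewrite (gaunt_even _ _ _ m) by lia.
    replace (Z.of_nat m - Z.of_nat a)%Z with (P - 1)%Z by (unfold P; lia).
    replace (Z.of_nat m - Z.of_nat (S b - 1))%Z with Q by (unfold Q; lia).
    now replace (Z.of_nat m - Z.of_nat c)%Z with (R - 1)%Z by (unfold R; lia). }
  assert (Hc0 : INR c * gaunt a b (c - 1) = INR c * (2 / (2 * INR m + 1)
                  * acoefZ (P - 1) * acoefZ (Q - 1) * acoefZ R / acoef m)).
  { destruct c as [|c]; [simpl; ring|]. rewrite (gaunt_even _ _ _ m) by lia.
    replace (Z.of_nat m - Z.of_nat a)%Z with (P - 1)%Z by (unfold P; lia).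
    replace (Z.of_nat m - Z.of_nat b)%Z with (Q - 1)%Z by (unfold Q; lia).
    now replace (Z.of_nat m - Z.of_nat (S c - 1))%Z with R by (unfold R; lia). }
  rewrite Hb1, Hc1, Hb0, Hc0.
  assert (Eb : INR b = INR (S m) - IZR Q)
    by (unfold Q; rewrite minus_IZR, <- !INR_IZR_INZ; ring).
  assert (Ec : INR c = INR (S m) - IZR R)
    by (unfold R; rewrite minus_IZR, <- !INR_IZR_INZ; ring).
  assert (Em : 2 * INR m + 1 = 2 * INR (S m) - 1) by (rewrite S_INR; ring).
  assert (Es : INR (S m) = IZR P + IZR Q + IZR R - 1).
  { unfold P, Q, R. rewrite !minus_IZR, <- !INR_IZR_INZ, !S_INR.
    assert (H : INR (a + b + c) = INR (2 * m + 1)) by now rewrite Hm.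
    rewrite !plus_INR, mult_INR in H. simpl in H. lra. }
  rewrite Eb, Ec, Em.
  pose proof (acoef_pos (S m)). pose proof (pos_INR m).
  apply (gaunt_rec_identity (IZR P) (IZR Q) (IZR R) (INR (S m)));
    auto using acoefZ_pred, odd_IZR_neq_0, acoef_S;
    [rewrite S_INR; lra | lra].
Qed.

Lemma gaunt_shift_rec a : shift_rec (gaunt a).
Proof.
  intros b c.
  destruct (Nat.Even_or_Odd (a + b + c)) as [[s Hs]|[m Hm]].
  - now apply (gaunt_shift_rec_even a b c s).
  - now apply (gaunt_shift_rec_odd a b c m).
Qed.

Lemma Fdot_0_b_0 b : Fdot 0 b 0 = gaunt 0 b 0.
Proof.
  unfold Fdot.
  rewrite (RInt_ext _ (legendre b)) by (intros; simpl; rewrite legendre_0; ring).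
  rewrite RInt_legendre. destruct b as [|b]; simpl Nat.eqb.
  - rewrite (gaunt_even 0 0 0 0) by lia. simpl. field.
  - destruct (Nat.Even_or_Odd (S b)) as [[s Hs]|[m Hm]].
    + rewrite (gaunt_even 0 (S b) 0 s), (acoefZ_neg (Z.of_nat s - Z.of_nat (S b))) by lia.
      unfold Rdiv. ring.
    + now rewrite (gaunt_odd 0 (S b) 0 m) by lia.
Qed.

Lemma gaunt_rotate a b : gaunt 0 a b = gaunt a b 0.
Proof.
  destruct (Nat.Even_or_Odd (a + b)) as [[s Hs]|[m Hm]].
  - rewrite (gaunt_even 0 a b s), (gaunt_even a b 0 s) by lia. unfold Rdiv. ring.
  - now rewrite (gaunt_odd 0 a b m), (gaunt_odd a b 0 m) by lia.
Qed.

(* Adams' formula: both sides solve the shift recurrence, so it suffices to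
   compare them at c = 0; for a = 0 this is Fdot_0_b_0, and the general
   case reduces to a = 0 by the symmetry of Fdot. *)
Lemma Fdot_gaunt a b c : Fdot a b c = gaunt a b c.
Proof.
  assert (Fdot0 : forall b c, Fdot 0 b c = gaunt 0 b c).
  { apply shift_rec_unique; [apply Fdot_shift_rec|apply gaunt_shift_rec|apply Fdot_0_b_0]. }
  revert b c. apply shift_rec_unique; [apply Fdot_shift_rec|apply gaunt_shift_rec|].
  intros b. rewrite Fdot_swap12, Fdot_swap23, Fdot_swap12, Fdot_swap23, Fdot0.
  apply gaunt_rotate.
Qed.

Lemma Fdot_adams a b c s : (a + b + c = 2 * s)%nat ->
  (a <= s)%nat -> (b <= s)%nat -> (c <= s)%nat ->
  Fdot a b c =
    2 / (2 * INR s + 1) * acoef (s - a) * acoef (s - b) * acoef (s - c) / acoef s.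
Proof.
  intros Hs Ha Hb Hc. rewrite Fdot_gaunt, (gaunt_even a b c s Hs).
  now rewrite <- !Nat2Z.inj_sub, !acoefZ_nat by assumption.
Qed.

Definition adams_weight (d i : nat) : R :=
  (2 * INR (d + i) + 1) * acoef (d + i) / acoef i.

Lemma adams_weight_pos d i : 0 < adams_weight d i.
Proof.
  unfold adams_weight. pose proof (pos_INR (d + i)).
  pose proof (acoef_pos (d + i)). pose proof (acoef_pos i).
  apply Rdiv_lt_0_compat; [apply Rmult_lt_0_compat|]; lra.
Qed.

Lemma Fdot_diagonal d k i : (k <= d)%nat ->
  Fdot d (k + i) (d - k + i) = 2 * acoef (d - k) * acoef k / adams_weight d i.
Proof.
  intros hk. rewrite (Fdot_adams _ _ _ (d + i)%nat) by lia.
  replace (d + i - d)%nat with i by lia.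
  replace (d + i - (k + i))%nat with (d - k)%nat by lia.
  replace (d + i - (d - k + i))%nat with k by lia.
  unfold adams_weight. pose proof (pos_INR (d + i)).
  pose proof (acoef_pos (d + i)). pose proof (acoef_pos i).
  field. repeat split; lra.
Qed.

(* w_d(i+1) / w_d(i) = (2D+3)(2i+2) / ((2D+2)(2i+1)) > 1 with D = d + i. *)
Lemma adams_weight_S d i : adams_weight d i < adams_weight d (S i).
Proof.
  pose proof (adams_weight_pos d i) as Hw.
  pose proof (pos_INR (d + i)). pose proof (pos_INR i).
  pose proof (acoef_pos (d + i)). pose proof (acoef_pos i).
  assert (E : adams_weight d (S i) = adams_weight d i *
     ((2 * INR (d + i) + 3) * (2 * INR i + 2) / ((2 * INR (d + i) + 2) * (2 * INR i + 1)))).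
  { unfold adams_weight. rewrite Nat.add_succ_r. simpl acoef. rewrite !S_INR.
    field. repeat split; lra. }
  rewrite E. rewrite <- (Rmult_1_r (adams_weight d i)) at 1.
  apply Rmult_lt_compat_l; [exact Hw|].
  apply Rlt_gt, Rlt_div_r; [apply Rmult_lt_0_compat|]; lra.
Qed.

Lemma adams_weight_gt_0 d i : (1 <= i)%nat -> adams_weight d 0 < adams_weight d i.
Proof.
  intros hi. induction i as [|i IH]; [lia|].
  destruct i as [|i]; [apply adams_weight_S|].
  apply (Rlt_trans _ _ _ (IH ltac:(lia))), adams_weight_S.
Qed.

Theorem lemmaA2 (d k i : nat) (hk : (k <= d)%nat) (hi : (1 <= i)%nat) :
  Fdot d k (d - k) > Fdot d (k + i) (d - k + i) /\
  Fdot d (k + i) (d - k + i) > 0.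
Proof.
  pose proof (Fdot_diagonal d k 0 hk) as F0. rewrite !Nat.add_0_r in F0.
  rewrite F0, (Fdot_diagonal d k i hk).
  pose proof (adams_weight_pos d 0) as Hw0. pose proof (adams_weight_gt_0 d i hi) as Hwi.
  assert (Hc : 0 < 2 * acoef (d - k) * acoef k).
  { pose proof (acoef_pos (d - k)). pose proof (acoef_pos k).
    apply Rmult_lt_0_compat; [apply Rmult_lt_0_compat|]; lra. }
  split.
  - apply Rmult_lt_compat_l; [exact Hc|]. apply Rinv_lt_contravar; [|exact Hwi].
    apply Rmult_lt_0_compat; lra.
  - apply Rdiv_lt_0_compat; lra.
Qed.
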